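(* Let $\mathcal{Q}=(Q,\leq^Q)$ with $Q=\{1,\dots,k\}$ and $\mathcal{P}=(P,\leq^P)$ be finite posets, let $(C_1,\dots,C_w)$ be any chain partition of $\mathcal{P}$, and let $f:Q\to\{1,\dots,w\}$ be arbitrary. Let $G=G(\mathcal{P},\mathcal{Q},f)$ be the graph whose vertex set is a disjoint union $V_1\,\dot\cup\cdots\dot\cup\, V_k$ where $V_i$ is a copy of $C_{f(i)}$, and where for $p\in V_i$, $q\in V_j$ being copies of $p'\in C_{f(i)}$, $q'\in C_{f(j)}$, we have $pq\in E(G)$ iff $i\neq j$ and both ($p'\leq^P q'$ iff $i\leq^Q j$) and ($p'\geq^P q'$ iff $i\geq^Q j$). Then $G$, with the colour classes $V_1,\dots,V_k$, contains a clique of size $|Q|$ if and only if $\mathcal{Q}$ has an embedding $e$ into $\mathcal{P}$ compatible with $f$ (i.e., $e(q)\in C_{f(q)}$ for all $q\in Q$).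
   Context: A chain partition of $\mathcal{P}$ is a partition of $P$ into chains (sets of pairwise comparable elements). An embedding from $\mathcal{Q}$ into $\mathcal{P}$ is an injective function $e:Q\to P$ such that $q\leq^Q q'$ iff $e(q)\leq^P e(q')$ for all $q,q'\in Q$. A clique is a set of pairwise adjacent vertices. *)

From mathcomp Require Import all_boot.
Set Implicit Arguments. Unset Strict Implicit. Unset Printing Implicit Defensive.

Definition is_poset (T : finType) (le : rel T) : Prop :=
  reflexive le /\ antisymmetric le /\ transitive le.

Definition is_chain (T : finType) (le : rel T) (A : {set T}) : Prop :=
  {in A &, forall x y, le x y || le y x}.

Definition chain_partition (P : finType) (leP : rel P) (w : nat)
    (C : 'I_w -> {set P}) : Prop :=
  [/\ forall a, C a != set0,
      forall a b, a != b -> [disjoint C a & C b],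
      forall p, exists a, p \in C a
    & forall a, is_chain leP (C a)].

(* Vertices of G(P,Q,f): pairs (i, p) with p in C_{f(i)} (copy of p in V_i). *)
Definition Gvert (P : finType) (k w : nat) (C : 'I_w -> {set P})
    (f : 'I_k -> 'I_w) : {set 'I_k * P} :=
  [set x | x.2 \in C (f x.1)].

Definition Gadj (P : finType) (leP : rel P) (k : nat) (leQ : rel 'I_k)
    (x y : 'I_k * P) : bool :=
  [&& x.1 != y.1,
      leP x.2 y.2 == leQ x.1 y.1 &
      leP y.2 x.2 == leQ y.1 x.1].

Definition is_clique (V : finType) (adj : rel V) (S : {set V}) : Prop :=
  {in S &, forall x y, x != y -> adj x y}.

Definition is_embedding (P : finType) (leP : rel P) (k : nat)
    (leQ : rel 'I_k) (e : 'I_k -> P) : Prop :=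
  injective e /\ forall q q', leQ q q' = leP (e q) (e q').

From mathcomp Require Import all_boot.

(* A k-clique of G meets every colour class V_q exactly once, because
   adjacent vertices lie in different classes; reading off the chosen vertex
   of each class gives a map e with e q in C (f q), and the adjacency
   condition says precisely that e preserves and reflects the order.
   Conversely the graph {(q, e q)} of a compatible embedding is a k-clique.
   Neither direction uses that the C a form a chain partition. *)

Section CliquesOfG.

Variables (k : nat) (leQ : rel 'I_k) (P : finType) (leP : rel P).
Variables (w : nat) (C : 'I_w -> {set P}) (f : 'I_k -> 'I_w).

Local Notation adj := (Gadj leP leQ).

Lemma Gadj_fst_neq x y : adj x y -> x.1 != y.1.
Proof. by case/and3P. Qed.

Lemma clique_fst_inj {S : {set 'I_k * P}} :
  is_clique adj S -> {in S &, injective (fun x : 'I_k * P => x.1)}.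
Proof.
move=> clS x y xS yS eq_fst; apply/eqP; apply: contraT => neq_xy.
by move/Gadj_fst_neq: (clS x y xS yS neq_xy); rewrite eq_fst eqxx.
Qed.

Lemma clique_meets_classes {S : {set 'I_k * P}} :
  is_clique adj S -> #|S| = k -> forall q, exists p, (q, p) \in S.
Proof.
move=> clS cardS q.
have fstS : [set x.1 | x in S] = [set: 'I_k].
  have fst_inj := clique_fst_inj clS.
  apply/eqP; rewrite eqEcard subsetT cardsT card_ord.
  by rewrite card_in_imset // cardS leqnn.
have /imsetP [[q' p] xS /= ->] : q \in [set x.1 | x in S] by rewrite fstS inE.
by exists p.
Qed.

Hypotheses (leQ_refl : reflexive leQ) (leQ_anti : antisymmetric leQ).
Hypothesis leP_refl : reflexive leP.

Lemma clique_embedding (S : {set 'I_k * P}) :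
  S \subset Gvert C f -> #|S| = k -> is_clique adj S ->
  exists e : 'I_k -> P, is_embedding leP leQ e /\ forall q, e q \in C (f q).
Proof.
move=> sSG cardS clS; have inS := clique_meets_classes clS cardS.
pose e q := xchoose (inS q); have eS q : (q, e q) \in S := xchooseP (inS q).
have e_mono q q' : leQ q q' = leP (e q) (e q').
  have [-> | neq_qq'] := eqVneq q q'; first by rewrite leQ_refl leP_refl.
  have neq_x : (q, e q) != (q', e q') by apply: contra neq_qq' => /eqP [->].
  by case/and3P: (clS _ _ (eS q) (eS q') neq_x) => _ /eqP.
exists e; split; last by move=> q; have := subsetP sSG _ (eS q); rewrite inE.
split=> // q q' eq_e; apply: leQ_anti.
by rewrite !e_mono eq_e leP_refl.
Qed.

Lemma embedding_graph_clique e :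
  is_embedding leP leQ e -> (forall q, e q \in C (f q)) ->
  [/\ [set (q, e q) | q : 'I_k] \subset Gvert C f,
      #|[set (q, e q) | q : 'I_k]| = k
    & is_clique adj [set (q, e q) | q : 'I_k]].
Proof.
move=> [_ e_mono] eC; split.
- by apply/subsetP => _ /imsetP [q _ ->]; rewrite inE /=.
- by rewrite card_imset ?card_ord // => q q' [].
move=> _ _ /imsetP [q _ ->] /imsetP [q' _ ->] neq_x.
have neq_q : q != q' by apply: contra neq_x => /eqP ->.
by rewrite /Gadj /= neq_q !e_mono !eqxx.
Qed.

End CliquesOfG.

Theorem proposition4p1 (k : nat) (leQ : rel 'I_k)
    (P : finType) (leP : rel P) (w : nat) (C : 'I_w -> {set P})
    (f : 'I_k -> 'I_w) :
  is_poset leQ -> is_poset leP -> chain_partition leP C ->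
  (exists S : {set 'I_k * P},
      [/\ S \subset Gvert C f, #|S| = k & is_clique (Gadj leP leQ) S])
  <->
  (exists e : 'I_k -> P,
      is_embedding leP leQ e /\ forall q, e q \in C (f q)).
Proof.
move=> [leQ_refl [leQ_anti _]] [leP_refl _] _; split.
- by move=> [S [sSG cardS clS]]; exact: clique_embedding sSG cardS clS.
- move=> [e [emb_e eC]]; exists [set (q, e q) | q : 'I_k].
  exact: embedding_graph_clique.
Qed.
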